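(* Let $D=\mathbb S^{d-1}$ and consider the fully connected network $f^1(x)=W^0Vx$, $f^{\ell+1}(x)=W^\ell m_\ell^{-1/2}\sigma(f^\ell(x))$ for $\ell=1,\dots,L$, with scalar output $f^{L+1}$ (so $m_{L+1}=1$), where $V\in\mathbb R^{m_0\times d}$ satisfies $V^TV=I$, $W^\ell\in\mathbb R^{m_{\ell+1}\times m_\ell}$, the last-layer weights $W^L$ have entries in $\{-1,+1\}$, and only $\theta=W^{L-1}$ is trained. Assume the activation (which may differ from layer to layer) satisfies $|\sigma(x)|\lesssim|x|$ and $|\sigma(x)-\sigma(\bar x)|\lesssim|x-\bar x|$, that $m_L\sim m_{L-1}\sim\dots\sim m_0$, and that the gradient descent iterates (for the loss $\ell(\theta)=\frac12\|f^{L+1}-f\|_{L_2(D)}^2$ with target $f$ and step $\theta^{k+1}=\theta^k-\gamma\nabla_\theta\ell(\theta^k)$) satisfy $\|W^\ell(n)\|m_\ell^{-1/2}\lesssim1$. Then, with $\kappa^n=f^{L+1}_{\theta^n}-f$, $$\|\nabla_\theta\ell(\theta^n)\|\lesssim\|\kappa^n\|_{L_2(D)}.$$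
   Context: $\|\cdot\|$ denotes the spectral norm of a matrix; $W^\ell(n)$ denotes the layer-$\ell$ weights after $n$ gradient descent steps. $a\lesssim b$ (and $\sim$) means inequality up to constants independent of the widths (possibly depending on $L$ and $d$). *)

From HB Require Import structures.
From mathcomp Require Import all_boot all_order all_algebra.
From mathcomp Require Import all_classical all_reals all_analysis.
Set Implicit Arguments. Unset Strict Implicit. Unset Printing Implicit Defensive.
Import Order.TTheory GRing.Theory Num.Theory.
Import numFieldNormedType.Exports.
Local Open Scope classical_set_scope.
Local Open Scope ring_scope.

Section Defs.
Variable R : realType.

Definition vnorm n (v : 'cV[R]_n) : R := Num.sqrt (\sum_i (v i 0) ^+ 2).

Definition specnorm m n (A : 'M[R]_(m, n)) : R :=
  sup [set vnorm (A *m v) | v in [set v : 'cV[R]_n | vnorm v <= 1]].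

Definition BorelcV (d : nat) := g_sigma_algebraType (@open 'cV[R]_d).

Definition sphere (d : nat) : set (BorelcV d) := [set x : 'cV[R]_d | vnorm x = 1].

Definition isqrt (k : nat) : R := (Num.sqrt (k%:R))^-1.

Definition cmap n (s : R -> R) (v : 'cV[R]_n) : 'cV[R]_n := \col_i s (v i 0).

(* Network with widths m : nat -> nat, weights W l : 'M_(m l.+1, m l),
   activations sig l, input embedding V : 'M_(m 0, d).
   act 0 x = V x ; act (l+1) x = m_{l+1}^{-1/2} sig_{l+1}(f^{l+1}(x)),
   where f^{l+1}(x) = W l (act l x). *)
Fixpoint act (m : nat -> nat) d (V : 'M[R]_(m 0, d))
  (W : forall l, 'M[R]_(m l.+1, m l)) (sig : nat -> R -> R)
  (x : 'cV[R]_d) (l : nat) : 'cV[R]_(m l) :=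
  match l with
  | 0 => V *m x
  | l'.+1 => isqrt (m l'.+1) *: cmap (sig l'.+1) (W l' *m act V W sig x l')
  end.

Definition preact (m : nat -> nat) d (V : 'M[R]_(m 0, d))
  (W : forall l, 'M[R]_(m l.+1, m l)) (sig : nat -> R -> R)
  (x : 'cV[R]_d) (l : nat) : 'cV[R]_(m l.+1) := W l *m act V W sig x l.

(* Scalar network output f^{L+1}(x) for depth L (m (L+1) = 1 is assumed
   in the theorem; the sum is then over the unique output coordinate). *)
Definition netout (m : nat -> nat) d (V : 'M[R]_(m 0, d))
  (W : forall l, 'M[R]_(m l.+1, m l)) (sig : nat -> R -> R) (L : nat)
  (x : 'cV[R]_d) : R := \sum_i (preact V W sig x L) i 0.

(* Loss as a function of the trained layer theta = W^{L-1} (here L = K+1,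
   so the trained layer has index K), the other layers taken from W. *)
Definition loss (m : nat -> nat) d (mu : {measure set (BorelcV d) -> \bar R})
  (V : 'M[R]_(m 0, d)) (W : forall l, 'M[R]_(m l.+1, m l))
  (sig : nat -> R -> R) (K : nat) (f : 'cV[R]_d -> R)
  (theta : 'M[R]_(m K.+1, m K)) : R :=
  2^-1 * Rintegral mu (@sphere d)
    (fun x => (netout V (@dfwith _ (fun l => 'M[R]_(m l.+1, m l)) W K theta) sig K.+1 x - f x) ^+ 2).

Definition L2norm d (mu : {measure set (BorelcV d) -> \bar R})
  (g : 'cV[R]_d -> R) : R :=
  Num.sqrt (Rintegral mu (@sphere d) (fun x => g x ^+ 2)).

Definition is_gradient p q (F : 'M[R]_(p, q) -> R) (theta G : 'M[R]_(p, q)) :=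
  differentiable F theta /\
  forall H : 'M[R]_(p, q), 'd F theta H = \sum_i \sum_j G i j * H i j.

End Defs.

From HB Require Import structures.
From mathcomp Require Import all_boot all_order all_algebra.
From mathcomp Require Import all_classical all_reals all_analysis.
From mathcomp Require Import ring lra.
From mathcomp Require Import measurable_realfun lebesgue_integrable lebesgue_Rintegral.
Import Order.TTheory GRing.Theory Num.Theory.
Import numFieldNormedType.Exports.
Local Open Scope classical_set_scope.
Local Open Scope ring_scope.

Set Implicit Arguments. Unset Strict Implicit. Unset Printing Implicit Defensive.

(* The loss is half the squared L2(D)-norm of the residual r_th = f^{L+1}_th - f.
   Moving the trained layer from th to th + t H changes the output at x by at most
   t CW Csig |H a(x)|, where a(x) = act^{L-1}(x) are the features feeding the trained
   layer; on the sphere they are bounded by (Csig CW sqrt cm)^{L-1}, since V is an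
   isometry and each layer has gain at most Csig CW sqrt cm. Expanding the square and
   using Cauchy-Schwarz in L2(D) gives
     loss(th + t H) - loss(th) <= t B sqrt(mu D) |r_th|_{L2} + O(t^2),
   hence <grad, H> <= B sqrt(mu D) |r_th|_{L2} for every H = u v^T with |u| = 1,
   |v| <= 1, and the supremum of <grad, u v^T> over such H is the spectral norm. *)

Section EuclideanNorm.
Variable R : realType.
Implicit Types (n k : nat).

Lemma vnorm_ge0 n (v : 'cV[R]_n) : 0 <= vnorm v.
Proof. exact: sqrtr_ge0. Qed.

Lemma vnorm_sqr n (v : 'cV[R]_n) : vnorm v ^+ 2 = \sum_i v i 0 ^+ 2.
Proof. by rewrite sqr_sqrtr // sumr_ge0 // => i _; exact: sqr_ge0. Qed.

Lemma vnorm0 n : vnorm (0 : 'cV[R]_n) = 0.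
Proof. by rewrite /vnorm big1 ?sqrtr0 // => i _; rewrite mxE expr0n. Qed.

Lemma vnorm_eq0 n (v : 'cV[R]_n) : vnorm v = 0 -> v = 0.
Proof.
move=> v0; apply/matrixP => i j; rewrite ord1 mxE; apply/eqP; rewrite -sqrf_eq0.
have /psumr_eq0P vi0 : \sum_i v i 0 ^+ 2 = 0 by rewrite -vnorm_sqr v0 expr0n.
by rewrite vi0 // => k _; exact: sqr_ge0.
Qed.

Lemma vnorm_le_coord n (p q : 'cV[R]_n) c : 0 <= c ->
  (forall i, `|p i 0| <= c * `|q i 0|) -> vnorm p <= c * vnorm q.
Proof.
move=> c0 pq; rewrite -(ler_pXn2r (n := 2)) ?nnegrE ?mulr_ge0 ?vnorm_ge0 //.
rewrite exprMn !vnorm_sqr mulr_sumr; apply: ler_sum => i _.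
rewrite -exprMn -[p i 0 ^+ 2]real_normK ?num_real // -[(c * q i 0) ^+ 2]real_normK ?num_real //.
by rewrite ler_pXn2r ?nnegrE // normrM (ger0_norm c0) pq.
Qed.

Lemma vnormZ n (a : R) (v : 'cV[R]_n) : vnorm (a *: v) = `|a| * vnorm v.
Proof.
rewrite /vnorm -sqrtr_sqr -sqrtrM ?sqr_ge0 // mulr_sumr.
by congr (Num.sqrt _); apply: eq_bigr => i _; rewrite mxE exprMn.
Qed.

Lemma coord_le_vnorm n (v : 'cV[R]_n) i : `|v i 0| <= vnorm v.
Proof.
rewrite -(ler_pXn2r (n := 2)) ?nnegrE ?vnorm_ge0 // vnorm_sqr real_normK ?num_real //.
by rewrite (bigD1 i) //= lerDl sumr_ge0 // => j _; exact: sqr_ge0.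
Qed.

Lemma vnorm_le_l1 n (v : 'cV[R]_n) : vnorm v <= \sum_i `|v i 0|.
Proof.
rewrite -(ler_pXn2r (n := 2)) ?nnegrE ?vnorm_ge0 ?sumr_ge0 // vnorm_sqr.
rewrite expr2 mulr_suml; apply: ler_sum => i _.
rewrite -real_normK ?num_real // expr2 ler_wpM2l // (bigD1 i) //= lerDl.
by rewrite sumr_ge0.
Qed.

Lemma vnorm_isometry m n (V : 'M[R]_(m, n)) x :
  V^T *m V = 1%:M -> vnorm (V *m x) = vnorm x.
Proof.
have sum_sqrE k (v : 'cV[R]_k) : \sum_i v i 0 ^+ 2 = (v^T *m v) 0 0.
  by rewrite mxE; apply: eq_bigr => i _; rewrite mxE expr2.
by move=> VV; rewrite /vnorm !sum_sqrE trmx_mul -mulmxA (mulmxA V^T) VV mul1mx.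
Qed.

Lemma sum_mul_sqr_le n (a b : 'I_n -> R) :
  (\sum_i a i * b i) ^+ 2 <= (\sum_i a i ^+ 2) * (\sum_i b i ^+ 2).
Proof.
set A := \sum_i a i ^+ 2; set B := \sum_i b i ^+ 2; set S := \sum_i a i * b i.
have B_ge0 : 0 <= B by apply: sumr_ge0 => i _; exact: sqr_ge0.
have [B0|B_gt0] := eqVneq B 0.
  have b0 i : b i = 0.
    apply/eqP; rewrite -sqrf_eq0; apply/eqP.
    by apply: (psumr_eq0P _ B0) => // j _; exact: sqr_ge0.
  by rewrite /S big1 ?B0 ?mulr0 ?expr0n // => i _; rewrite b0 mulr0.
have residualsE : \sum_i (a i * B - b i * S) ^+ 2 = B * (A * B - S ^+ 2).
  transitivity (\sum_i (B ^+ 2 * a i ^+ 2 - (2 * B * S) * (a i * b i) + S ^+ 2 * b i ^+ 2)).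
    by apply: eq_bigr => i _; ring.
  by rewrite big_split /= sumrB -!mulr_sumr -/A -/B -/S; ring.
have : 0 <= B * (A * B - S ^+ 2) by rewrite -residualsE sumr_ge0 // => i _; exact: sqr_ge0.
by rewrite pmulr_rge0 ?lt_def ?B_gt0 // subr_ge0 mulrC.
Qed.

Lemma dot_le_vnorm n (u v : 'cV[R]_n) : `|(u^T *m v) 0 0| <= vnorm u * vnorm v.
Proof.
rewrite -(ler_pXn2r (n := 2)) ?nnegrE ?mulr_ge0 ?vnorm_ge0 //.
rewrite exprMn !vnorm_sqr real_normK ?num_real // mxE.
under eq_bigr do rewrite mxE.
exact: sum_mul_sqr_le (fun j => u j 0) (fun j => v j 0).
Qed.

Lemma sum_le_vnorm n (w : 'cV[R]_n) : `|\sum_i w i 0| <= Num.sqrt n%:R * vnorm w.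
Proof.
rewrite -(ler_pXn2r (n := 2)) ?nnegrE ?mulr_ge0 ?vnorm_ge0 ?sqrtr_ge0 //.
rewrite exprMn vnorm_sqr sqr_sqrtr ?ler0n // real_normK ?num_real //.
have := sum_mul_sqr_le (fun _ => 1) (fun i => w i 0).
by under eq_bigr do rewrite mul1r; rewrite sumr_const card_ord expr1n.
Qed.

End EuclideanNorm.

Section SpectralNorm.
Variable R : realType.
Implicit Types (p q : nat).

Let specnorm_set p q (A : 'M[R]_(p, q)) :=
  [set vnorm (A *m v) | v in [set v : 'cV[R]_q | vnorm v <= 1]].

Let specnorm_set0 p q (A : 'M[R]_(p, q)) : specnorm_set A 0.
Proof. by exists 0; rewrite /= ?mulmx0 vnorm0. Qed.

Let specnorm_set_ubound p q (A : 'M[R]_(p, q)) : has_ubound (specnorm_set A).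
Proof.
exists (\sum_i \sum_j `|A i j|) => _ [v /= v1 <-].
apply: le_trans (vnorm_le_l1 _) _; apply: ler_sum => i _.
rewrite mxE; apply: le_trans (ler_norm_sum _ _ _) _; apply: ler_sum => j _.
rewrite normrM -[X in _ <= X]mulr1 ler_wpM2l //.
exact: le_trans (coord_le_vnorm _ _) v1.
Qed.

Lemma specnorm_ge0 p q (A : 'M[R]_(p, q)) : 0 <= specnorm A.
Proof. exact: (ub_le_sup (specnorm_set_ubound A) (specnorm_set0 A)). Qed.

Lemma vnorm_mulmx_le p q (A : 'M[R]_(p, q)) v : vnorm (A *m v) <= specnorm A * vnorm v.
Proof.
have [v0|v_neq0] := eqVneq (vnorm v) 0.
  by rewrite v0 mulr0 (vnorm_eq0 v0) mulmx0 vnorm0.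
have v_gt0 : 0 < vnorm v by rewrite lt_def v_neq0 vnorm_ge0.
have unit_v : specnorm_set A (vnorm (A *m ((vnorm v)^-1 *: v))).
  by exists ((vnorm v)^-1 *: v) => //=; rewrite vnormZ ger0_norm ?invr_ge0 ?vnorm_ge0 // mulVf.
have := ub_le_sup (specnorm_set_ubound A) unit_v.
by rewrite -scalemxAr vnormZ ger0_norm ?invr_ge0 ?vnorm_ge0 // mulrC ler_pdivrMr // mulrC.
Qed.

Lemma specnorm_le p q (A : 'M[R]_(p, q)) M :
  (forall v, vnorm v <= 1 -> vnorm (A *m v) <= M) -> specnorm A <= M.
Proof.
move=> AM; apply: ge_sup; first by exists 0; exact: specnorm_set0.
by move=> _ [v /= v1 <-]; exact: AM.
Qed.

Lemma vnorm_rank1_mulmx_le n k (u : 'cV[R]_n) (v a : 'cV[R]_k) :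
  vnorm u = 1 -> vnorm v <= 1 -> vnorm ((u *m v^T) *m a) <= vnorm a.
Proof.
move=> u1 v1; rewrite -mulmxA (mx11_scalar (v^T *m a)) mul_mx_scalar vnormZ u1 mulr1.
apply: le_trans (dot_le_vnorm v a) _.
by rewrite -[X in _ <= X]mul1r ler_wpM2r ?vnorm_ge0.
Qed.

Lemma specnorm_le_pairing p q (A : 'M[R]_(p, q)) M : 0 <= M ->
  (forall u v, vnorm u = 1 -> vnorm v <= 1 -> \sum_i \sum_j A i j * (u *m v^T) i j <= M) ->
  specnorm A <= M.
Proof.
move=> M0 AM; apply: specnorm_le => v v1.
set w := A *m v; have [w0|w_neq0] := eqVneq (vnorm w) 0; first by rewrite w0.
have := AM ((vnorm w)^-1 *: w) v _ v1.
rewrite vnormZ ger0_norm ?invr_ge0 ?vnorm_ge0 // mulVf // => /(_ erefl).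
congr (_ <= _); rewrite -[RHS](mulKf w_neq0) -expr2 vnorm_sqr mulr_sumr.
apply: eq_bigr => i _; rewrite expr2 mulrA [X in _ = _ * X]mxE mulr_sumr.
by apply: eq_bigr => j _; rewrite !mxE big_ord1 !mxE; ring.
Qed.

End SpectralNorm.

Section RealInequalities.
Variable R : realType.

Lemma sqr_le_split (u e s : R) : 0 < s ->
  u ^+ 2 <= (1 + s) * e ^+ 2 + (1 + s^-1) * (u - e) ^+ 2.
Proof.
move=> s_gt0; rewrite -subr_ge0.
have -> : (1 + s) * e ^+ 2 + (1 + s^-1) * (u - e) ^+ 2 - u ^+ 2 =
    s^-1 * (s * e - (u - e)) ^+ 2 by field; rewrite gt_eqF.
by rewrite mulr_ge0 ?invr_ge0 ?sqr_ge0 ?ltW.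
Qed.

Lemma le_mul_of_amgm (X A B : R) : 0 <= A -> 0 <= B ->
  (forall s, 0 < s -> X <= (s * A ^+ 2 + B ^+ 2 / s) / 2) -> X <= A * B.
Proof.
move=> A_ge0 B_ge0 amgm; have [X_le0|X_gt0] := lerP X 0.
  exact: le_trans X_le0 (mulr_ge0 A_ge0 B_ge0).
have [A0|A_neq0] := eqVneq A 0.
  set s := B ^+ 2 / X + 1.
  have s_gt0 : 0 < s by rewrite ltr_wpDl ?divr_ge0 ?sqr_ge0 ?ltW.
  have Xs : X * s = B ^+ 2 + X by rewrite mulrDr mulr1 mulrC divfK ?gt_eqF.
  have := amgm _ s_gt0; rewrite A0 expr0n mulr0 add0r !ler_pdivlMr //.
  have := sqr_ge0 B; nra.
have s_gt0 : 0 < X / A ^+ 2 by rewrite divr_gt0 ?exprn_gt0 // lt_def A_neq0.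
have := amgm _ s_gt0; rewrite divfK ?expf_neq0 //.
have -> : B ^+ 2 / (X / A ^+ 2) = (A * B) ^+ 2 / X by field; rewrite A_neq0 gt_eqF.
move=> XY; have XX : X * X <= (A * B) ^+ 2.
  by rewrite -ler_pdivlMr //; move: XY; set Y := _ / X; lra.
have AB_ge0 := mulr_ge0 A_ge0 B_ge0.
by rewrite -(ler_pXn2r (n := 2)) ?nnegrE ?(ltW X_gt0) // expr2.
Qed.

Lemma lipschitz_const_ge0 (s : R -> R) c :
  (forall a b, `|s a - s b| <= c * `|a - b|) -> 0 <= c.
Proof. by move=> /(_ 1 0); rewrite subr0 normr1 mulr1; apply: le_trans. Qed.

Lemma lipschitz_continuous (s : R -> R) c :
  (forall a b, `|s a - s b| <= c * `|a - b|) -> continuous s.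
Proof.
move=> s_lip x; have c1_gt0 : 0 < c + 1 by rewrite ltr_wpDl ?(lipschitz_const_ge0 s_lip).
apply/cvgrPdist_lt => e e_gt0; apply/nbhs_ballP.
exists (e / (c + 1)) => [|y /=]; first by rewrite /= divr_gt0.
rewrite /ball /= ltr_pdivlMr // => xy; apply: le_lt_trans (s_lip x y) _.
have := normr_ge0 (x - y); nra.
Qed.

End RealInequalities.

Section DirectionalDerivative.
Variables (R : realType) (U : normedModType R).

Lemma diff_le_of_expansion (F : U -> R) (th H : U) (P Q : R) :
  differentiable F th ->
  (forall t, 0 < t -> F (t *: H + th) - F th <= t * P + t ^+ 2 * Q) ->
  'd F th H <= P.
Proof.
move=> dF expansion; rewrite -deriveE //.
have Dcvg : t^-1 *: (F (t *: H + th) - F th) @[t --> 0^'] --> 'D_H F th.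
  exact: diff_derivable.
have Dcvg_right : t^-1 *: (F (t *: H + th) - F th) @[t --> 0^'+] --> 'D_H F th.
  move=> A /Dcvg; rewrite !nbhs_simpl /= /dnbhs /at_right /within /=.
  by apply: filterS => t At /lt0r_neq0; exact: At.
apply/ler_addgt0Pr => e e_gt0; apply: (cvgr_to_le Dcvg_right).
have Q1_gt0 : 0 < `|Q| + 1 by rewrite ltr_pwDr.
near=> t.
have t_gt0 : 0 < t by near: t; exact: nbhs_right_gt.
have t_small : t < e / (`|Q| + 1) by near: t; apply: nbhs_right_lt; rewrite divr_gt0.
rewrite /= -[X in X <= _]/(t^-1 * (F (t *: H + th) - F th)) mulrC ler_pdivrMr //.
apply: le_trans (expansion t t_gt0) _.
move: t_small; rewrite ltr_pdivlMr // => t_small.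
have := ler_norm Q; have := normr_ge0 Q; nra.
Unshelve. all: by end_near. Qed.

End DirectionalDerivative.

Section SquareIntegral.
Context (d0 : measure_display) (T : measurableType d0) (R : realType).
Variables (mu : {finite_measure set T -> \bar R}) (D : set T).
Hypothesis mD : measurable D.
Variables (u e : T -> R) (b : R).
Hypotheses (u_meas : measurable_fun D u)
  (e_sqr_int : mu.-integrable D (EFin \o (fun x => e x ^+ 2)))
  (ue_le : forall x, D x -> `|u x - e x| <= b).

Let majorant s x := (1 + s) * e x ^+ 2 + (1 + s^-1) * b ^+ 2.

Let majorant_integrable s : mu.-integrable D (EFin \o majorant s).
Proof.
apply: (eq_integrable mD (fun x => (1 + s)%:E * (e x ^+ 2)%:E + ((1 + s^-1) * b ^+ 2)%:E)%E).
  by move=> x _; rewrite /= EFinD EFinM.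
apply: (integrableD mD); first exact: integrableZl.
exact: finite_measure_integrable_cst.
Qed.

Let sqr_le_majorant s x : 0 < s -> D x -> u x ^+ 2 <= majorant s x.
Proof.
move=> s_gt0 Dx; apply: le_trans (sqr_le_split (u x) (e x) s_gt0) _.
have b_ge0 : 0 <= b := le_trans (normr_ge0 _) (ue_le Dx).
rewrite lerD2l ler_wpM2l ?addr_ge0 ?invr_ge0 ?(ltW s_gt0) // -real_normK ?num_real //.
by apply: lerXn2r; rewrite ?nnegrE ?ue_le.
Qed.

Lemma integrable_sqr_perturb : mu.-integrable D (EFin \o (fun x => u x ^+ 2)).
Proof.
apply: (le_integrable mD _ _ (majorant_integrable 1)) => [|x Dx].
  exact/measurable_EFinP/measurable_funX.
rewrite /= !ger0_norm ?lee_fin ?sqr_ge0 ?sqr_le_majorant //.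
exact: le_trans (sqr_ge0 _) (sqr_le_majorant _ Dx).
Qed.

Lemma Rintegral_sqr_perturb_le s : 0 < s ->
  \int[mu]_(x in D) u x ^+ 2 <=
    (1 + s) * \int[mu]_(x in D) e x ^+ 2 + (1 + s^-1) * b ^+ 2 * fine (mu D).
Proof.
move=> s_gt0; apply: (@le_trans _ _ (\int[mu]_(x in D) majorant s x)).
  apply: le_Rintegral => //; first exact: integrable_sqr_perturb.
  by move=> x; exact: sqr_le_majorant.
rewrite RintegralD //; last exact: finite_measure_integrable_cst.
  by rewrite RintegralZl // Rintegral_cst.
apply: (eq_integrable mD (fun x => (1 + s)%:E * (e x ^+ 2)%:E)%E); last exact: integrableZl.
by move=> x _; rewrite /= EFinM.
Qed.

End SquareIntegral.

Section HalfSquareLoss.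
Context (d0 : measure_display) (T : measurableType d0) (R : realType).
Variables (mu : {finite_measure set T -> \bar R}) (D : set T) (U : normedModType R).
Hypothesis mD : measurable D.

(* Cauchy-Schwarz in L2(D) enters in its AM-GM form: the cross term of
   [(r_th + Delta)^2] is split with weight [t s], and [s] is optimised at the end. *)
Lemma diff_half_sqr_loss_le (F : U -> R) (r : U -> T -> R) (th H : U) b :
  (forall th', F th' = 2^-1 * \int[mu]_(x in D) r th' x ^+ 2) ->
  differentiable F th ->
  (forall t, 0 < t -> measurable_fun D (r (t *: H + th))) ->
  mu.-integrable D (EFin \o (fun x => r th x ^+ 2)) ->
  0 <= b ->
  (forall t x, 0 < t -> D x -> `|r (t *: H + th) x - r th x| <= t * b) ->
  'd F th H <= b * Num.sqrt (fine (mu D)) * Num.sqrt (\int[mu]_(x in D) r th x ^+ 2).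
Proof.
move=> FE dF r_meas r_int b_ge0 r_lip.
set I0 := \int[mu]_(x in D) r th x ^+ 2; set muD := fine (mu D).
have I0_ge0 : 0 <= I0 by apply: Rintegral_ge0 => x _; exact: sqr_ge0.
have muD_ge0 : 0 <= muD by rewrite fine_ge0 ?measure_ge0.
rewrite mulrC; apply: le_mul_of_amgm; rewrite ?sqrtr_ge0 ?mulr_ge0 // => s s_gt0.
apply: (diff_le_of_expansion (Q := b ^+ 2 * muD / 2) dF) => t t_gt0.
have ts_gt0 : 0 < t * s by rewrite mulr_gt0.
have := Rintegral_sqr_perturb_le mD (r_meas t t_gt0) r_int (fun x Dx => r_lip t x t_gt0 Dx) ts_gt0.
rewrite !FE -/I0.
rewrite (sqr_sqrtr I0_ge0) [(b * _) ^+ 2]exprMn (sqr_sqrtr muD_ge0).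
have -> : (1 + (t * s)^-1) * (t * b) ^+ 2 * muD = t ^+ 2 * (b ^+ 2 * muD) + t * (b ^+ 2 * muD / s).
  by field; rewrite !gt_eqF.
lra.
Qed.

End HalfSquareLoss.

Section Activation.
Variable R : realType.

Lemma vnorm_cmap_lipschitz n (s : R -> R) c (u v : 'cV[R]_n) :
  (forall a b, `|s a - s b| <= c * `|a - b|) ->
  vnorm (cmap s u - cmap s v) <= c * vnorm (u - v).
Proof.
move=> s_lip; apply: vnorm_le_coord (lipschitz_const_ge0 s_lip) _ => i.
by rewrite !mxE.
Qed.

Lemma vnorm_cmap_le n (s : R -> R) c (u : 'cV[R]_n) : 0 <= c ->
  (forall a, `|s a| <= c * `|a|) -> vnorm (cmap s u) <= c * vnorm u.
Proof. by move=> c_ge0 s_lin; apply: vnorm_le_coord => // i; rewrite mxE. Qed.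

End Activation.

Lemma isqrt_ge0 (R : realType) k : 0 <= isqrt R k.
Proof. by rewrite invr_ge0 sqrtr_ge0. Qed.

Lemma scaled_specnorm_le (R : realType) p q (A : 'M[R]_(p, q)) CW cm :
  (0 < p)%N -> (0 < q)%N -> q%:R <= cm * p%:R -> specnorm A * isqrt R q <= CW ->
  isqrt R p * specnorm A <= CW * Num.sqrt cm.
Proof.
move=> p_gt0 q_gt0 qp A_le.
have sp_gt0 : 0 < Num.sqrt (p%:R : R) by rewrite sqrtr_gt0 ltr0n.
have sq_gt0 : 0 < Num.sqrt (q%:R : R) by rewrite sqrtr_gt0 ltr0n.
have CW_ge0 : 0 <= CW by apply: le_trans A_le; rewrite mulr_ge0 ?specnorm_ge0 ?isqrt_ge0.
have cm_ge0 : 0 <= cm.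
  have : (0 : R) < q%:R by rewrite ltr0n.
  have : (0 : R) < p%:R by rewrite ltr0n.
  nra.
rewrite mulrC ler_pdivrMr //; move: A_le; rewrite ler_pdivrMr // => /le_trans; apply.
by rewrite -mulrA ler_wpM2l // -sqrtrM // ler_sqrt ?mulr_ge0 ?ler0n.
Qed.

Section Network.
Variables (R : realType) (m : nat -> nat) (d : nat) (V : 'M[R]_(m 0%N, d)).
Variables (sig : nat -> R -> R) (W : forall l, 'M[R]_(m l.+1, m l)) (K : nat).

Local Notation update th := (@dfwith _ (fun l => 'M[R]_(m l.+1, m l)) W K th).

Definition netout_layer (th : 'M[R]_(m K.+1, m K)) (x : 'cV[R]_d) : R :=
  \sum_i (W K.+1 *m (isqrt R (m K.+1) *: cmap (sig K.+1) (th *m act V W sig x K))) i 0.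

Lemma act_dfwith th x l : (l <= K)%N -> act V (update th) sig x l = act V W sig x l.
Proof.
elim: l => [//|l IHl] lK /=.
by rewrite IHl ?(ltnW lK) // dfwithout // neq_ltn lK orbT.
Qed.

Lemma netout_dfwith th x : netout V (update th) sig K.+1 x = netout_layer th x.
Proof.
rewrite /netout /preact /netout_layer /= act_dfwith //.
by rewrite dfwithin dfwithout // neq_ltn ltnSn.
Qed.

Lemma netoutE x : netout V W sig K.+1 x = netout_layer (W K) x.
Proof. by []. Qed.

Lemma netout_layer_lipschitz c th1 th2 x :
  (forall a b, `|sig K.+1 a - sig K.+1 b| <= c * `|a - b|) ->
  `|netout_layer th1 x - netout_layer th2 x| <=
  Num.sqrt (m K.+2)%:R * (specnorm (W K.+1) * isqrt R (m K.+1)) * c *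
    vnorm ((th1 - th2) *m act V W sig x K).
Proof.
move=> sig_lip; set a := act V W sig x K.
set w := W K.+1 *m (isqrt R (m K.+1) *: (cmap (sig K.+1) (th1 *m a) - cmap (sig K.+1) (th2 *m a))).
have -> : netout_layer th1 x - netout_layer th2 x = \sum_i w i 0.
  by rewrite -sumrB; apply: eq_bigr => i _; rewrite /w scalerBr mulmxBr !mxE.
apply: le_trans (sum_le_vnorm w) _; rewrite -!mulrA ler_wpM2l ?sqrtr_ge0 //.
apply: le_trans (vnorm_mulmx_le _ _) _.
rewrite ler_wpM2l ?specnorm_ge0 // vnormZ ger0_norm ?isqrt_ge0 // ler_wpM2l ?isqrt_ge0 //.
by rewrite mulmxBl; exact: vnorm_cmap_lipschitz.
Qed.

Lemma netout_layer0 x : sig K.+1 0 = 0 -> netout_layer 0 x = 0.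
Proof.
move=> sig0; rewrite /netout_layer big1 // => i _.
have -> : cmap (sig K.+1) ((0 : 'M[R]_(m K.+1, m K)) *m act V W sig x K) = 0.
  by rewrite mul0mx; apply/matrixP => j k; rewrite !mxE sig0.
by rewrite scaler0 mulmx0 mxE.
Qed.

Lemma vnorm_act_le c CW cm x :
  (forall l a, `|sig l a| <= c * `|a|) -> V^T *m V = 1%:M ->
  (forall l, (l < K)%N -> specnorm (W l) * isqrt R (m l) <= CW) ->
  (forall l, (l <= K)%N -> (0 < m l)%N) ->
  (forall l, (l < K)%N -> (m l)%:R <= cm * (m l.+1)%:R) ->
  forall l, (l <= K)%N -> vnorm (act V W sig x l) <= (c * (CW * Num.sqrt cm)) ^+ l * vnorm x.
Proof.
move=> sig_lin V_isometry W_le m_gt0 m_cmp.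
have c_ge0 : 0 <= c by move: (sig_lin 0%N 1); rewrite normr1 mulr1; apply: le_trans.
set Q := c * (CW * Num.sqrt cm).
elim=> [_|l IHl lK] /=; first by rewrite vnorm_isometry // expr0 mul1r.
rewrite vnormZ ger0_norm ?isqrt_ge0 //.
apply: le_trans (ler_wpM2l (isqrt_ge0 _ _) (vnorm_cmap_le _ c_ge0 (sig_lin l.+1))) _.
have -> : Q ^+ l.+1 * vnorm x = c * (CW * Num.sqrt cm * (Q ^+ l * vnorm x)).
  by rewrite /Q exprSr; ring.
rewrite mulrCA ler_wpM2l //.
apply: le_trans (ler_wpM2l (isqrt_ge0 _ _) (vnorm_mulmx_le _ _)) _.
rewrite mulrA; apply: ler_pM; rewrite ?mulr_ge0 ?isqrt_ge0 ?specnorm_ge0 ?vnorm_ge0 //.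
  exact: scaled_specnorm_le (m_gt0 _ lK) (m_gt0 _ (ltnW lK)) (m_cmp _ lK) (W_le _ lK).
exact: IHl (ltnW lK).
Qed.

End Network.

Arguments netout_layer {R m d} V sig W K th x.

Section Measurability.
Variables (R : realType) (d : nat).

Lemma measurable_coord (i : 'I_d) : measurable_fun setT (fun x : BorelcV R d => x i 0).
Proof.
apply: (measurability _ (RGenOpens.measurableE R)) => _ [_ [a [b ->]] <-].
apply: measurableI => //; apply: sub_sigma_algebra.
by move: (@coord_continuous R d 1 i 0) => /continuousP; apply; exact: interval_open.
Qed.

Lemma measurable_sphere : measurable (@sphere R d).
Proof.
have mvnorm : measurable_fun setT (fun x : BorelcV R d => vnorm x).
  rewrite /vnorm; apply: measurableT_comp.
    exact: continuous_measurable_fun (@sqrt_continuous R).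
  by apply: measurable_sum => i; apply: measurable_funX; exact: measurable_coord.
by have := mvnorm measurableT _ (measurable_set1 (1 : R)); rewrite setTI.
Qed.

Variables (m : nat -> nat) (V : 'M[R]_(m 0%N, d)) (sig : nat -> R -> R).
Variables (W : forall l, 'M[R]_(m l.+1, m l)) (K : nat).
Hypothesis sig_cont : forall l, continuous (sig l).

Lemma measurable_act l i : measurable_fun setT (fun x : BorelcV R d => act V W sig x l i 0).
Proof.
elim: l i => [|l IHl] i /=.
  under eq_fun do rewrite mxE.
  by apply: measurable_sum => j; apply: measurable_funM => //; exact: measurable_coord.
under eq_fun do rewrite !mxE.
apply: measurable_funM => //; apply: measurableT_comp; first exact: continuous_measurable_fun.
by apply: measurable_sum => j; exact: measurable_funM.
Qed.

Lemma measurable_netout_layer th :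
  measurable_fun setT (fun x : BorelcV R d => netout_layer V sig W K th x).
Proof.
have -> : (fun x : BorelcV R d => netout_layer V sig W K th x) =
    (fun x => \sum_i \sum_j W K.+1 i j *
      (isqrt R (m K.+1) * sig K.+1 (\sum_k th j k * act V W sig x K k 0))).
  apply/funext => x; apply: eq_bigr => i _; rewrite !mxE.
  by apply: eq_bigr => j _; rewrite !mxE.
apply: measurable_sum => i; apply: measurable_sum => j.
apply: measurable_funM => //; apply: measurable_funM => //.
apply: measurableT_comp; first exact: continuous_measurable_fun.
by apply: measurable_sum => k; apply: measurable_funM => //; exact: measurable_act.
Qed.

End Measurability.

Arguments measurable_sphere {R d}.

Section NetworkLoss.
Variables (R : realType) (K d : nat) (mu : {finite_measure set (BorelcV R d) -> \bar R}).
Variables (Csig CW cm : R) (m : nat -> nat) (V : 'M[R]_(m 0%N, d)) (sig : nat -> R -> R).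
Variables (f : 'cV[R]_d -> R) (W : forall l, 'M[R]_(m l.+1, m l)).
Hypotheses (m_out : m K.+2 = 1%N) (m_gt0 : forall l, (l <= K.+1)%N -> (0 < m l)%N)
  (m_cmp : forall l1 l2, (l1 <= K.+1)%N -> (l2 <= K.+1)%N -> (m l1)%:R <= cm * (m l2)%:R)
  (V_isometry : V^T *m V = 1%:M)
  (sig_lin : forall l (x : R), `|sig l x| <= Csig * `|x|)
  (sig_lip : forall l (x y : R), `|sig l x - sig l y| <= Csig * `|x - y|)
  (f_meas : measurable_fun (@sphere R d) (fun x : BorelcV R d => f x))
  (f_sqr_int : mu.-integrable (@sphere R d) (fun x : BorelcV R d => (f x ^+ 2)%:E))
  (W_le : forall l, (l <= K.+1)%N -> specnorm (W l) * isqrt R (m l) <= CW).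

Local Notation D := (@sphere R d).
Local Notation feature_bound := ((Csig * (CW * Num.sqrt cm)) ^+ K).
Local Notation residual th x := (netout_layer V sig W K th x - f x).

Let Csig_ge0 : 0 <= Csig := lipschitz_const_ge0 (sig_lip 0).
Let CW_ge0 : 0 <= CW :=
  le_trans (mulr_ge0 (specnorm_ge0 _) (isqrt_ge0 _ _)) (W_le (leq0n K.+1)).
Let sig0 l : sig l 0 = 0.
Proof. by have := sig_lin l 0; rewrite normr0 mulr0 normr_le0 => /eqP. Qed.

Let feature_bound_ge0 : 0 <= feature_bound.
Proof. by rewrite exprn_ge0 ?mulr_ge0 ?sqrtr_ge0. Qed.

Let lipschitz_bound_ge0 : 0 <= CW * Csig * feature_bound.
Proof. exact: mulr_ge0 (mulr_ge0 CW_ge0 Csig_ge0) feature_bound_ge0. Qed.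

Let vnorm_features_le x : D x -> vnorm (act V W sig x K) <= feature_bound.
Proof.
move=> Dx; rewrite -[X in _ <= X]mulr1 -Dx.
apply: (vnorm_act_le (K := K)) => [||l lK|l lK|l lK|].
- exact: sig_lin.
- exact: V_isometry.
- exact: W_le (leqW (ltnW lK)).
- exact: m_gt0 (leqW lK).
- exact: m_cmp (leqW (ltnW lK)) (leqW lK).
- exact: leqnn.
Qed.

Let netout_layer_dist th1 th2 x :
  `|netout_layer V sig W K th1 x - netout_layer V sig W K th2 x| <=
    CW * Csig * vnorm ((th1 - th2) *m act V W sig x K).
Proof.
apply: le_trans (netout_layer_lipschitz V W (K := K) th1 th2 x (sig_lip K.+1)) _.
have -> : Num.sqrt (m K.+2)%:R = 1 :> R by rewrite m_out sqrtr1.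
by rewrite mul1r ler_wpM2r ?vnorm_ge0 // ler_wpM2r ?W_le.
Qed.

Let lossE : @loss R m d mu V W sig K f = fun th => 2^-1 * \int[mu]_(x in D) residual th x ^+ 2.
Proof. by apply/funext => th; rewrite /loss; under eq_Rintegral do rewrite netout_dfwith. Qed.

Let L2normE : L2norm mu (fun x => netout V W sig K.+1 x - f x) =
  Num.sqrt (\int[mu]_(x in D) residual (W K) x ^+ 2).
Proof. by rewrite /L2norm; under eq_Rintegral do rewrite netoutE. Qed.

Let measurable_residual th : measurable_fun D (fun x : BorelcV R d => residual th x).
Proof.
apply: measurable_funB; last exact: f_meas.
apply: measurable_funTS.
exact: measurable_netout_layer (fun l => lipschitz_continuous (sig_lip l)) th.
Qed.

Let integrable_sqr_residual th :
  mu.-integrable D (EFin \o (fun x : BorelcV R d => residual th x ^+ 2)).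
Proof.
(* the residual is a bounded perturbation of [- f] *)
apply: (integrable_sqr_perturb (e := fun x => - f x)
  (b := CW * Csig * (specnorm th * feature_bound)) measurable_sphere (measurable_residual th)).
  by apply: (eq_integrable measurable_sphere _ _ _ f_sqr_int) => x _ /=; rewrite sqrrN.
move=> x Dx; rewrite opprK subrK.
have := netout_layer_dist th 0 x; rewrite netout_layer0; last exact: sig0.
rewrite !subr0 => /le_trans; apply.
apply: ler_wpM2l; first exact: mulr_ge0 CW_ge0 Csig_ge0.
apply: le_trans (vnorm_mulmx_le _ _) _.
by apply: ler_wpM2l; [exact: specnorm_ge0 | exact: vnorm_features_le].
Qed.

Lemma specnorm_gradient_le G : is_gradient (@loss R m d mu V W sig K f) (W K) G ->
  specnorm G <= CW * Csig * feature_bound * Num.sqrt (fine (mu D)) *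
    L2norm mu (fun x => netout V W sig K.+1 x - f x).
Proof.
case; rewrite lossE L2normE => dF dFE.
apply: specnorm_le_pairing => [|u v u1 v1].
  exact: mulr_ge0 (mulr_ge0 lipschitz_bound_ge0 (sqrtr_ge0 _)) (sqrtr_ge0 _).
rewrite -dFE; apply: (diff_half_sqr_loss_le (r := fun th x => residual th x) measurable_sphere
  (fun th => erefl) dF (fun t _ => measurable_residual _) (integrable_sqr_residual _)
  lipschitz_bound_ge0) => t x t_gt0 Dx.
rewrite opprB addrA subrK; apply: le_trans (netout_layer_dist _ _ x) _.
rewrite addrK -scalemxAl vnormZ (gtr0_norm t_gt0) mulrCA.
apply: ler_wpM2l; first exact: ltW.
apply: ler_wpM2l; first exact: mulr_ge0 CW_ge0 Csig_ge0.
exact: le_trans (vnorm_rank1_mulmx_le _ u1 v1) (vnorm_features_le Dx).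
Qed.

End NetworkLoss.

Theorem lemma5p3 (R : realType) (K d : nat)
  (mu : {finite_measure set (BorelcV R d) -> \bar R})
  (Csig CW cm : R) :
  exists C : R, 0 < C /\
  forall (m : nat -> nat) (V : 'M[R]_(m 0%N, d)) (sig : nat -> R -> R)
    (f : 'cV[R]_d -> R) (gamma : R)
    (Ws : nat -> forall l : nat, 'M[R]_(m l.+1, m l))
    (G : nat -> 'M[R]_(m K.+1, m K)),
  m K.+2 = 1%N ->
  (forall l, (l <= K.+1)%N -> (0 < m l)%N) ->
  (forall l1 l2, (l1 <= K.+1)%N -> (l2 <= K.+1)%N ->
     (m l1)%:R <= cm * (m l2)%:R) ->
  V^T *m V = 1%:M ->
  (forall l (x : R), `|sig l x| <= Csig * `|x|) ->
  (forall l (x y : R), `|sig l x - sig l y| <= Csig * `|x - y|) ->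
  measurable_fun (@sphere R d) (fun x : BorelcV R d => f x) ->
  mu.-integrable (@sphere R d) (fun x : BorelcV R d => (f x ^+ 2)%:E) ->
  0 < gamma ->
  (forall k (i : 'I_(m K.+2)) (j : 'I_(m K.+1)),
     Ws k K.+1 i j = 1 \/ Ws k K.+1 i j = -1) ->
  (forall k l, l != K -> Ws k l = Ws 0%N l) ->
  (forall k, is_gradient (@loss R m d mu V (Ws k) sig K f) (Ws k K) (G k)) ->
  (forall k, Ws k.+1 K = Ws k K - gamma *: G k) ->
  (forall k l, (l <= K.+1)%N -> specnorm (Ws k l) * isqrt R (m l) <= CW) ->
  forall n : nat,
    specnorm (G n) <= C * L2norm mu (fun x => netout V (Ws n) sig K.+1 x - f x).
Proof.
set B := CW * Csig * (Csig * (CW * Num.sqrt cm)) ^+ K * Num.sqrt (fine (mu (@sphere R d))).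
exists (1 + `|B|); split; first by have := normr_ge0 B; lra.
move=> m V sig f gamma Ws G m_out m_gt0 m_cmp V_isometry sig_lin sig_lip f_meas f_sqr_int
  _ _ _ grad _ W_le n.
apply: le_trans (specnorm_gradient_le m_out m_gt0 m_cmp V_isometry sig_lin sig_lip
  f_meas f_sqr_int (W_le n) (grad n)) _.
apply: ler_wpM2r; first exact: sqrtr_ge0.
by apply: le_trans (ler_norm B) _; rewrite lerDr.
Qed.
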